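(* Let $n\in\mathbb{N}$. (i) Let $S$ be a pseudo-symmetric numerical semigroup and $A\subseteq\{x\in S\mid \frac{\mathrm{F}(S)}{2}<x<\mathrm{F}(S)\}$ with $\#A=n$ such that $S\setminus A$ is a numerical semigroup. Then $\mathrm{l}(S\setminus A)=2n+1$. (ii) Conversely, for every numerical semigroup $T$ with $\mathrm{l}(T)=2n+1$ there exist a pseudo-symmetric numerical semigroup $S$ with $\mathrm{F}(S)=\mathrm{F}(T)$ and a set $A\subseteq\{x\in S\mid \frac{\mathrm{F}(S)}{2}<x<\mathrm{F}(S)\}$ with $\#A=n$ such that $T=S\setminus A$.
   Context: A numerical semigroup is a subset $S\subseteq\mathbb{N}$ closed under addition with $0\in S$ and $\mathbb{N}\setminus S$ finite; $\mathrm{F}(S)=\max(\mathbb{Z}\setminus S)$. $\mathrm{N}(S)=\{s\in S\mid s<\mathrm{F}(S)\}$, $\mathrm{L}(S)=\{x\in\mathbb{N}\setminus S\mid \mathrm{F}(S)-x\notin \mathrm{N}(S)\}$, $\mathrm{l}(S)=\#\mathrm{L}(S)$. A numerical semigroup is irreducible if it is not the intersection of two numerical semigroups properly containing it; pseudo-symmetric means irreducible with even Frobenius number. *)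

(* Subsets of N are predicates nat -> Prop; the Frobenius
   number is an integer (F(N) = -1). *)
From Stdlib Require Import ZArith List ClassicalEpsilon.
Import ListNotations.
Open Scope Z_scope.

Definition inZ (S : nat -> Prop) (z : Z) : Prop := 0 <= z /\ S (Z.to_nat z).

Definition numerical_semigroup (S : nat -> Prop) : Prop :=
  S 0%nat /\
  (forall x y, S x -> S y -> S (x + y)%nat) /\
  (exists m : nat, forall x, (m <= x)%nat -> S x).

Definition is_frobenius (S : nat -> Prop) (f : Z) : Prop :=
  ~ inZ S f /\ (forall z, f < z -> inZ S z).

Definition Frob (S : nat -> Prop) : Z :=
  epsilon (inhabits 0) (is_frobenius S).

Definition Nset (S : nat -> Prop) (z : Z) : Prop := inZ S z /\ z < Frob S.

Definition Lset (S : nat -> Prop) (x : nat) : Prop :=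
  ~ S x /\ ~ Nset S (Frob S - Z.of_nat x).

Definition has_card (P : nat -> Prop) (k : nat) : Prop :=
  exists l : list nat, NoDup l /\ (forall x, In x l <-> P x) /\ length l = k.

Definition properly_contains (S1 S : nat -> Prop) : Prop :=
  (forall x, S x -> S1 x) /\ (exists x, S1 x /\ ~ S x).

Definition irreducible (S : nat -> Prop) : Prop :=
  numerical_semigroup S /\
  ~ (exists S1 S2 : nat -> Prop,
       numerical_semigroup S1 /\ numerical_semigroup S2 /\
       properly_contains S1 S /\ properly_contains S2 S /\
       (forall x, S x <-> (S1 x /\ S2 x))).

Definition pseudo_symmetric (S : nat -> Prop) : Prop :=
  irreducible S /\ Z.Even (Frob S).

Definition setminus (S A : nat -> Prop) : nat -> Prop := fun x => S x /\ ~ A x.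

(* S is irreducible iff every element of L(S) equals F(S)/2 (a gap x of L(S) with
   2x > F(S) could be adjoined to S, as could F(S), exhibiting S as an intersection).
   L(S) is always symmetric under x |-> F(S) - x.  For (i), removing A from a
   pseudo-symmetric S gives L(S \ A) = {F/2} ∪ A ∪ (F - A).  For (ii), the symmetry of
   L(T) and the odd cardinality force F(T)/2 ∈ L(T) with n elements of L(T) above it;
   adjoining these n elements to T yields a semigroup whose L-set is {F/2}. *)

From Stdlib Require Import ZArith List FinFun Lia Classical ClassicalEpsilon.
Import ListNotations.
Open Scope Z_scope.

Lemma has_card_ext (P Q : nat -> Prop) m :
  (forall x, P x <-> Q x) -> has_card P m -> has_card Q m.
Proof.
  intros PQ [l [Hnd [Hl Hlen]]]. exists l; split; [|split]; auto.
  intros x. rewrite Hl. apply PQ.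
Qed.

Lemma has_card_unique (P : nat -> Prop) m m' :
  has_card P m -> has_card P m' -> m = m'.
Proof.
  intros [l [Hl [Pl <-]]] [l' [Hl' [Pl' <-]]].
  apply Nat.le_antisymm; apply NoDup_incl_length; auto;
    intros x Hx; [apply Pl', Pl | apply Pl, Pl']; exact Hx.
Qed.

Lemma has_card_singleton (c : nat) : has_card (fun x => x = c) 1.
Proof.
  exists [c]. split; [repeat constructor; auto|split; auto].
  intros x; simpl; split; [intros [E|[]]|intros E; left]; auto.
Qed.

Lemma has_card_union (P Q : nat -> Prop) a b :
  (forall x, P x -> ~ Q x) -> has_card P a -> has_card Q b ->
  has_card (fun x => P x \/ Q x) (a + b).
Proof.
  intros PQ [l [Hl [Pl <-]]] [l' [Hl' [Ql' <-]]].
  exists (l ++ l'). split; [|split].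
  - apply NoDup_app; auto. intros x Hx Hx'. apply (PQ x); [apply Pl | apply Ql']; auto.
  - intros x. rewrite in_app_iff, Pl, Ql'. tauto.
  - apply length_app.
Qed.

Lemma has_card_image (g : nat -> nat) (P : nat -> Prop) a :
  (forall x y, P x -> P y -> g x = g y -> x = y) -> has_card P a ->
  has_card (fun y => exists x, P x /\ y = g x) a.
Proof.
  intros Hg [l [Hl [Pl <-]]]. exists (map g l). split; [|split].
  - apply Injective_map_NoDup_in; auto. intros x y Hx Hy. apply Hg; apply Pl; auto.
  - intros y. rewrite in_map_iff. split.
    + intros [x [<- Hx]]. exists x. split; auto. apply Pl; auto.
    + intros [x [Px ->]]. exists x. split; auto. apply Pl; auto.
  - apply length_map.
Qed.

Lemma has_card_split (P Q : nat -> Prop) m : has_card P m ->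
  exists a b, has_card (fun x => P x /\ Q x) a /\
              has_card (fun x => P x /\ ~ Q x) b /\ m = (a + b)%nat.
Proof.
  intros [l [Hl [Pl <-]]].
  set (q := fun x => if excluded_middle_informative (Q x) then true else false).
  assert (qQ : forall x, q x = true <-> Q x).
  { intros x. unfold q. destruct (excluded_middle_informative (Q x)); split; auto; discriminate. }
  exists (length (filter q l)), (length (filter (fun x => negb (q x)) l)).
  split; [|split].
  - exists (filter q l). split; [apply NoDup_filter; auto|split; auto].
    intros x. rewrite filter_In, Pl, qQ. tauto.
  - exists (filter (fun x => negb (q x)) l). split; [apply NoDup_filter; auto|split; auto].
    intros x. rewrite filter_In, Pl, Bool.negb_true_iff, <- Bool.not_true_iff_false, qQ. tauto.
  - symmetry. apply filter_length.
Qed.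

Lemma has_card_le_1 (P : nat -> Prop) c :
  (forall x y, P x -> P y -> x = y) -> has_card P c -> (c <= 1)%nat.
Proof.
  intros Huniq [[|a [|b l]] [Hl [Pl <-]]]; simpl; auto.
  exfalso. inversion Hl as [|? ? Ha]. apply Ha. left. apply Huniq; apply Pl; simpl; auto.
Qed.

Lemma has_card_1_inhabited (P : nat -> Prop) : has_card P 1 -> exists x, P x.
Proof.
  intros [[|a l] [_ [Pl Hlen]]]; [discriminate|]. exists a. apply Pl. left; auto.
Qed.

Lemma bounded_max (P : nat -> Prop) b : (forall x, P x -> (x <= b)%nat) ->
  (exists x, P x) -> exists h, P h /\ forall y, P y -> (y <= h)%nat.
Proof.
  induction b as [|b IH]; intros Hb [x Px].
  - exists x. split; auto. intros y Py. pose proof (Hb x Px). pose proof (Hb y Py). lia.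
  - destruct (classic (P (S b))) as [Pb|Pb].
    + exists (S b). split; auto.
    + apply IH; [|exists x; auto]. intros y Py. pose proof (Hb y Py).
      destruct (Nat.eq_dec y (S b)) as [->|]; [contradiction|lia].
Qed.

Lemma has_card_reflection_union (F : Z) (A : nat -> Prop) n :
  (exists c, 2 * Z.of_nat c = F) -> (forall x, A x -> F < 2 * Z.of_nat x < 2 * F) ->
  has_card A n ->
  has_card (fun x => 2 * Z.of_nat x = F \/ A x \/
                     exists a, A a /\ Z.of_nat x + Z.of_nat a = F) (2 * n + 1).
Proof.
  intros [c Hc] HA An.
  set (refl := fun a => Z.to_nat (F - Z.of_nat a)).
  assert (Refl : has_card (fun y => exists a, A a /\ y = refl a) n).
  { apply has_card_image; auto. intros a b Aa Ab. pose proof (HA a Aa). pose proof (HA b Ab).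
    unfold refl. lia. }
  assert (Arefl : has_card (fun x => A x \/ exists a, A a /\ x = refl a) (n + n)).
  { apply has_card_union; auto. intros x Ax [a [Aa E]].
    pose proof (HA x Ax). pose proof (HA a Aa). unfold refl in *. lia. }
  replace (2 * n + 1)%nat with (1 + (n + n))%nat by lia.
  eapply has_card_ext; [|apply has_card_union; [|apply (has_card_singleton c)|exact Arefl]].
  - intros x. split; [intros [->|[Ax|[a [Aa ->]]]]|intros [E|[Ax|[a [Aa E]]]]].
    + left. exact Hc.
    + right; left; auto.
    + pose proof (HA a Aa). right; right. exists a. unfold refl. split; auto. lia.
    + left. lia.
    + right; left; auto.
    + pose proof (HA a Aa). right; right. exists a. unfold refl. split; auto. lia.
  - intros x -> [Ax|[a [Aa Ea]]]; [pose proof (HA _ Ax)|pose proof (HA _ Aa); unfold refl in Ea]; lia.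
Qed.

Lemma has_card_odd_reflection (F : Z) (P : nat -> Prop) n :
  (forall x, P x -> Z.of_nat x <= F) ->
  (forall x, P x -> P (Z.to_nat (F - Z.of_nat x))) ->
  has_card P (2 * n + 1) ->
  (exists c, P c /\ 2 * Z.of_nat c = F) /\
  has_card (fun x => P x /\ F < 2 * Z.of_nat x) n.
Proof.
  intros Ple Prefl Pn.
  destruct (has_card_split P (fun x => F < 2 * Z.of_nat x) _ Pn) as (u & r & Up & Rest & E).
  destruct (has_card_split _ (fun x => 2 * Z.of_nat x < F) _ Rest) as (l & c & Low & Mid & E').
  assert (lu : l = u).
  { apply (has_card_unique (fun x => (P x /\ ~ F < 2 * Z.of_nat x) /\ 2 * Z.of_nat x < F)); auto.
    eapply has_card_ext; [|apply (has_card_image (fun x => Z.to_nat (F - Z.of_nat x))); [|exact Up]].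
    - intros y. split.
      + intros [x [[Px Fx] ->]]. pose proof (Ple x Px). split; [split; [apply Prefl; auto|]|]; lia.
      + intros [[Py Fy] Fy']. pose proof (Ple y Py). exists (Z.to_nat (F - Z.of_nat y)).
        split; [split; [apply Prefl; auto|lia]|lia].
    - intros x y [Px _] [Py _]. pose proof (Ple x Px). pose proof (Ple y Py). lia. }
  assert (c1 : (c <= 1)%nat).
  { refine (has_card_le_1 _ c _ Mid). intros x y [[_ Fx] Fx'] [[_ Fy] Fy']. lia. }
  assert (c = 1%nat /\ u = n) as [-> <-] by lia.
  split; auto. destruct (has_card_1_inhabited _ Mid) as [x [[Px Fx] Fx']].
  exists x. split; auto. lia.
Qed.

Lemma inZ_of_nat (G : nat -> Prop) n : inZ G (Z.of_nat n) <-> G n.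
Proof. unfold inZ. rewrite Nat2Z.id. split; [tauto|split; [lia|auto]]. Qed.

Lemma inZ_add (G : nat -> Prop) a b :
  (forall x y, G x -> G y -> G (x + y)%nat) -> inZ G a -> inZ G b -> inZ G (a + b).
Proof.
  intros Gadd [Ha Ga] [Hb Gb]. split; [lia|]. rewrite Z2Nat.inj_add by lia. auto.
Qed.

Lemma frobenius_exists (G : nat -> Prop) :
  numerical_semigroup G -> exists f, is_frobenius G f.
Proof.
  intros [G0 [_ [m Gm]]]. induction m as [|m IH].
  - exists (-1). split; [unfold inZ; lia|]. intros z Hz. split; [lia|apply Gm; lia].
  - destruct (classic (G m)) as [Hm|Hm].
    + apply IH. intros x Hx. destruct (Nat.eq_dec x m) as [->|]; auto. apply Gm; lia.
    + exists (Z.of_nat m). split; [rewrite inZ_of_nat; auto|].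
      intros z Hz. split; [lia|apply Gm; lia].
Qed.

Lemma Frob_spec (G : nat -> Prop) : numerical_semigroup G -> is_frobenius G (Frob G).
Proof. intros HG. unfold Frob. apply epsilon_spec, frobenius_exists, HG. Qed.

Lemma Frob_eq (G : nat -> Prop) f : is_frobenius G f -> Frob G = f.
Proof.
  intros [Nf Hf].
  assert (HFrob : is_frobenius G (Frob G)).
  { unfold Frob. apply epsilon_spec. exists f. split; auto. }
  destruct HFrob as [NF HF].
  destruct (Z.lt_total f (Frob G)) as [l|[e|l]]; auto.
  - exfalso. apply NF, Hf, l.
  - exfalso. apply Nf, HF, l.
Qed.

Lemma Frob_ext (G H : nat -> Prop) : numerical_semigroup G ->
  (forall x, Frob G <= Z.of_nat x -> (G x <-> H x)) -> Frob H = Frob G.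
Proof.
  intros HG GH. destruct (Frob_spec G HG) as [NF HF]. apply Frob_eq. split.
  - intros [HF0 HFr]. apply NF. split; auto. apply GH; auto. lia.
  - intros z Hz. destruct (HF z Hz) as [Hz0 Gz]. split; auto. apply GH; auto. lia.
Qed.

Lemma Lset_iff (G : nat -> Prop) x : G 0%nat ->
  Lset G x <-> ~ G x /\ ~ inZ G (Frob G - Z.of_nat x).
Proof.
  intros G0. unfold Lset, Nset. split; intros [Gx C]; split; auto.
  - intros HC. apply C. split; auto. destruct x; [contradiction|lia].
  - tauto.
Qed.

Definition upper_Lset (G : nat -> Prop) (x : nat) : Prop :=
  Lset G x /\ Frob G < 2 * Z.of_nat x.

Section Semigroup.

Variable G : nat -> Prop.
Hypothesis HG : numerical_semigroup G.

Local Notation F := (Frob G).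

Let G0 : G 0%nat := proj1 HG.
Let Gadd : forall x y, G x -> G y -> G (x + y)%nat := proj1 (proj2 HG).

Lemma Frob_notin : ~ inZ G F.
Proof. apply Frob_spec, HG. Qed.

Lemma Frob_ge_neg1 : -1 <= F.
Proof.
  apply Z.nlt_ge. intros HF. destruct (proj2 (Frob_spec G HG) (-1) HF). lia.
Qed.

Lemma gap_le_Frob x : ~ G x -> Z.of_nat x <= F.
Proof.
  intros Gx. apply Z.nlt_ge. intros Hx. apply Gx, inZ_of_nat. apply Frob_spec; auto.
Qed.

Lemma Frob_not_sum x y : G x -> G y -> Z.of_nat x + Z.of_nat y <> F.
Proof.
  intros Gx Gy E. apply Frob_notin. rewrite <- E, <- Nat2Z.inj_add.
  apply inZ_of_nat, Gadd; auto.
Qed.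

Lemma Lset_lt_Frob x : Lset G x -> Z.of_nat x < F.
Proof.
  rewrite Lset_iff by exact G0. intros [Gx C]. pose proof (gap_le_Frob x Gx).
  enough (Z.of_nat x <> F) by lia. intros E. apply C.
  rewrite E, Z.sub_diag. apply (inZ_of_nat G 0), G0.
Qed.

Lemma Lset_reflect x : Lset G x -> Lset G (Z.to_nat (F - Z.of_nat x)).
Proof.
  intros Lx. pose proof (Lset_lt_Frob x Lx). rewrite !Lset_iff in * by exact G0. destruct Lx as [Gx C].
  split.
  - rewrite <- inZ_of_nat, Z2Nat.id by lia. exact C.
  - rewrite Z2Nat.id by lia. replace (F - (F - Z.of_nat x)) with (Z.of_nat x) by ring.
    rewrite inZ_of_nat. exact Gx.
Qed.

Lemma Lset_add a b : Lset G a -> G b -> ~ G (a + b)%nat -> Lset G (a + b)%nat.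
Proof.
  rewrite !Lset_iff by exact G0. intros [Ga C] Gb Gab. split; auto. intros Cab. apply C.
  replace (F - Z.of_nat a) with (F - Z.of_nat (a + b) + Z.of_nat b) by lia.
  apply inZ_add; [apply Gadd | | apply inZ_of_nat]; auto.
Qed.

Lemma oversemigroup_contains_Frob (G1 : nat -> Prop) h :
  (forall x, Lset G x -> 2 * Z.of_nat x = F) ->
  (forall x y, G1 x -> G1 y -> G1 (x + y)%nat) -> (forall x, G x -> G1 x) ->
  G1 h -> ~ G h -> inZ G1 F.
Proof.
  intros Lhalf G1add GG1 G1h Gh.
  destruct (classic (inZ G (F - Z.of_nat h))) as [C|C].
  - replace F with (Z.of_nat h + (F - Z.of_nat h)) by ring.
    apply inZ_add; auto. apply inZ_of_nat; auto. destruct C; split; auto.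
  - rewrite <- (Lhalf h) by (apply Lset_iff; auto; exact G0).
    replace (2 * Z.of_nat h) with (Z.of_nat h + Z.of_nat h) by ring.
    apply inZ_add; auto; apply inZ_of_nat; auto.
Qed.

Lemma irreducible_of_Lset_half :
  (forall x, Lset G x -> 2 * Z.of_nat x = F) -> irreducible G.
Proof.
  intros Lhalf. split; auto.
  intros (G1 & G2 & HG1 & HG2 & [GG1 [h1 [G1h1 Gh1]]] & [GG2 [h2 [G2h2 Gh2]]] & E).
  destruct (oversemigroup_contains_Frob G1 h1) as [F0 G1F]; try apply HG1; auto.
  destruct (oversemigroup_contains_Frob G2 h2) as [_ G2F]; try apply HG2; auto.
  apply Frob_notin. split; [exact F0|]. apply E. auto.
Qed.

Lemma add_Frob_semigroup : numerical_semigroup (fun y => G y \/ Z.of_nat y = F).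
Proof.
  pose proof HG as (_ & _ & m & Gm). destruct (Frob_spec G HG) as [_ HF].
  split; [left; auto|split; [|exists m; intros; left; auto]].
  assert (absorb : forall a b, G a -> Z.of_nat b = F -> G (a + b)%nat \/ Z.of_nat (a + b) = F).
  { intros a b Ga Eb. destruct (Nat.eq_dec a 0) as [->|a0]; [right; auto|].
    left. apply inZ_of_nat, HF. lia. }
  intros a b [Ga|Ea] [Gb|Eb].
  - left. apply Gadd; auto.
  - apply absorb; auto.
  - rewrite Nat.add_comm. apply absorb; auto.
  - assert (F0 : F <> 0) by (intros E; apply Frob_notin; rewrite E; apply (inZ_of_nat G 0); auto).
    left. apply inZ_of_nat, HF. lia.
Qed.

Lemma add_gap_semigroup h : (forall a, G a -> a <> 0%nat -> G (a + h)%nat) ->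
  F < 2 * Z.of_nat h -> numerical_semigroup (fun y => G y \/ y = h).
Proof.
  intros absorb Fh. pose proof HG as (_ & _ & m & Gm).
  split; [left; auto|split; [|exists m; intros; left; auto]].
  assert (absorb' : forall a, G a -> G (a + h)%nat \/ (a + h)%nat = h).
  { intros a Ga. destruct (Nat.eq_dec a 0) as [->|a0]; [right; reflexivity|left; apply absorb; assumption]. }
  intros a b [Ga| ->] [Gb| ->].
  - left. apply Gadd; auto.
  - apply absorb'; auto.
  - rewrite Nat.add_comm. apply absorb'; auto.
  - left. apply inZ_of_nat, Frob_spec; auto. lia.
Qed.

Lemma upper_Lset_max : (exists x, upper_Lset G x) ->
  exists h, upper_Lset G h /\ forall y, upper_Lset G y -> (y <= h)%nat.
Proof.
  apply bounded_max with (b := Z.to_nat F).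
  intros y [Ly _]. pose proof (Lset_lt_Frob y Ly). lia.
Qed.

Lemma Lset_half_of_irreducible :
  irreducible G -> forall x, Lset G x -> 2 * Z.of_nat x = F.
Proof.
  intros [_ Hirr] x Lx. apply NNPP. intros NE.
  assert (upper : exists y, upper_Lset G y).
  { destruct (Z_lt_le_dec F (2 * Z.of_nat x)); [exists x; split; auto|].
    pose proof (Lset_lt_Frob x Lx).
    exists (Z.to_nat (F - Z.of_nat x)). split; [apply Lset_reflect; auto|lia]. }
  destruct (upper_Lset_max upper) as (h & [Lh Fh] & hmax).
  pose proof (Lset_lt_Frob h Lh) as hF.
  assert (Gh : ~ G h) by exact (proj1 Lh).
  assert (absorb : forall a, G a -> a <> 0%nat -> G (a + h)%nat).
  { intros a Ga a0. apply NNPP. intros Gah.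
    assert (Lah : Lset G (a + h)).
    { rewrite Nat.add_comm. apply Lset_add; auto. rewrite Nat.add_comm. exact Gah. }
    assert (Fah : F < 2 * Z.of_nat (a + h)) by lia.
    specialize (hmax (a + h)%nat (conj Lah Fah)). lia. }
  apply Hirr. exists (fun y => G y \/ y = h), (fun y => G y \/ Z.of_nat y = F).
  split; [apply add_gap_semigroup; auto|split; [apply add_Frob_semigroup|split; [|split]]].
  - split; [intros; left; auto|exists h; auto].
  - split; [intros; left; auto|]. exists (Z.to_nat F). split; [right; lia|].
    intros GF. apply Frob_notin. split; [lia|auto].
  - intros y. split; [intros Gy; split; left; auto|].
    intros [[Gy| ->] [Gy'|E]]; auto. lia.
Qed.

Definition add_upper_Lset (x : nat) : Prop := G x \/ upper_Lset G x.

Lemma add_upper_Lset_semigroup : numerical_semigroup add_upper_Lset.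
Proof.
  pose proof HG as (_ & _ & m & Gm).
  split; [left; auto|split; [|exists m; intros; left; auto]].
  assert (absorb : forall a b, upper_Lset G a -> G b -> add_upper_Lset (a + b)).
  { intros a b [La Fa] Gb. destruct (classic (G (a + b)%nat)) as [Gab|Gab]; [left; auto|].
    right. split; [apply Lset_add; auto|lia]. }
  intros a b [Ga|Ua] [Gb|Ub].
  - left. apply Gadd; auto.
  - rewrite Nat.add_comm. apply absorb; auto.
  - apply absorb; auto.
  - left. apply inZ_of_nat, Frob_spec; auto. destruct Ua, Ub. lia.
Qed.

Lemma Frob_add_upper_Lset : Frob add_upper_Lset = F.
Proof.
  apply Frob_ext; auto. intros x Hx. unfold add_upper_Lset. split; [left; auto|].
  intros [Gx|[Lx _]]; auto. pose proof (Lset_lt_Frob x Lx). lia.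
Qed.

Lemma Lset_add_upper_Lset_half x :
  Lset add_upper_Lset x -> 2 * Z.of_nat x = Frob add_upper_Lset.
Proof.
  rewrite Frob_add_upper_Lset, Lset_iff, Frob_add_upper_Lset by (left; apply G0).
  unfold add_upper_Lset. intros [Sx Cx].
  assert (Lx : Lset G x).
  { rewrite Lset_iff by exact G0. split; [tauto|]. intros [? ?]. apply Cx. split; auto. }
  pose proof (Lset_lt_Frob x Lx).
  assert (Ux : ~ F < 2 * Z.of_nat x) by (intros Fx; apply Sx; right; split; auto).
  assert (Uy : ~ F < 2 * Z.of_nat (Z.to_nat (F - Z.of_nat x))).
  { intros Fy. apply Cx. split; [lia|]. right. split; auto. apply Lset_reflect; auto. }
  lia.
Qed.

End Semigroup.

Lemma Lset_setminus (S A : nat -> Prop) : numerical_semigroup S ->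
  (forall x, Lset S x -> 2 * Z.of_nat x = Frob S) ->
  (forall x, A x -> S x /\ Frob S < 2 * Z.of_nat x /\ Z.of_nat x < Frob S) ->
  forall x, Lset (setminus S A) x <->
    2 * Z.of_nat x = Frob S \/ A x \/ exists a, A a /\ Z.of_nat x + Z.of_nat a = Frob S.
Proof.
  intros HS Lhalf HA x.
  assert (FT : Frob (setminus S A) = Frob S).
  { apply Frob_ext; auto. intros y Hy. unfold setminus. split; [|tauto].
    intros Sy. split; auto. intros Ay. destruct (HA y Ay). lia. }
  assert (T0 : setminus S A 0%nat).
  { split; [apply HS|]. intros A0. destruct (HA _ A0). lia. }
  rewrite (Lset_iff _ x T0), FT. unfold setminus, inZ. split.
  - intros [Tx Cx]. destruct (classic (A x)) as [Ax|Ax]; [auto|].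
    destruct (classic (inZ S (Frob S - Z.of_nat x))) as [[Hx SFx]|C].
    + right; right. exists (Z.to_nat (Frob S - Z.of_nat x)). split; [|lia].
      apply NNPP. intros AFx. apply Cx. auto.
    + left. apply Lhalf, Lset_iff; [apply HS|]. tauto.
  - intros [E|[Ax|[a [Aa E]]]].
    + assert (Sx : ~ S x) by (intros Sx; apply (Frob_not_sum S HS x x); auto; lia).
      split; [tauto|]. intros [_ [C _]]. apply Sx. replace x with (Z.to_nat (Frob S - Z.of_nat x)) by lia.
      exact C.
    + destruct (HA x Ax) as [Sx _]. split; [tauto|]. intros [Hx [C _]].
      apply (Frob_not_sum S HS x (Z.to_nat (Frob S - Z.of_nat x))); auto. lia.
    + destruct (HA a Aa) as [Sa _]. split.
      * intros [Sx _]. apply (Frob_not_sum S HS x a); auto.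
      * intros [_ [_ C]]. apply C. replace (Z.to_nat (Frob S - Z.of_nat x)) with a by lia. exact Aa.
Qed.

Theorem proposition22 (n : nat) :
  (forall (S A : nat -> Prop),
     pseudo_symmetric S ->
     (forall x, A x -> S x /\ Frob S < 2 * Z.of_nat x /\ Z.of_nat x < Frob S) ->
     has_card A n ->
     numerical_semigroup (setminus S A) ->
     has_card (Lset (setminus S A)) (2 * n + 1)%nat)
  /\
  (forall T : nat -> Prop,
     numerical_semigroup T ->
     has_card (Lset T) (2 * n + 1)%nat ->
     exists S A : nat -> Prop,
       pseudo_symmetric S /\ Frob S = Frob T /\
       (forall x, A x -> S x /\ Frob S < 2 * Z.of_nat x /\ Z.of_nat x < Frob S) /\
       has_card A n /\
       (forall x, T x <-> setminus S A x)).
Proof.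
  split.
  -
    intros S A [Hirr [k Hk]] HA An _.
    pose proof (proj1 Hirr) as HS. pose proof (Frob_ge_neg1 S HS).
    eapply has_card_ext; [intros x; symmetry; apply Lset_setminus; auto|].
    + apply Lset_half_of_irreducible; auto.
    + apply has_card_reflection_union; auto.
      * exists (Z.to_nat k). lia.
      * intros x Ax. destruct (HA x Ax). lia.
  - intros T HT LT.
    destruct (has_card_odd_reflection (Frob T) (Lset T) n) as [[c [_ Hc]] Upper]; auto.
    { intros x Lx. pose proof (Lset_lt_Frob T HT x Lx). lia. }
    { apply Lset_reflect; auto. }
    pose proof (Frob_add_upper_Lset T HT) as FS.
    exists (add_upper_Lset T), (upper_Lset T). split; [|split; [|split; [|split]]]; auto.
    + split.
      * apply irreducible_of_Lset_half; [apply add_upper_Lset_semigroup|apply Lset_add_upper_Lset_half]; auto.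
      * rewrite FS. exists (Z.of_nat c). lia.
    + intros x [Lx Fx]. pose proof (Lset_lt_Frob T HT x Lx). rewrite FS.
      split; [right; split|split]; auto.
    + intros x. unfold setminus, add_upper_Lset, upper_Lset, Lset. tauto.
Qed.
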